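(* Let $G$ be a group acting faithfully by homeomorphisms on an infinite Hausdorff space $\mathcal{X}$, and let $U$ be an open subset of $\mathcal{X}$ such that its $G$-orbit $\{gU: g\in G\}$ is a basis of the topology of $\mathcal{X}$. Then every non-trivial normal subgroup of $G$ contains $R_U$.
   Context: For an open $U\subset\mathcal{X}$, $G_{(U)}$ denotes the subgroup of elements of $G$ acting trivially on $\mathcal{X}\setminus U$, and $R_U$ denotes the normal closure in $G$ of the derived subgroup $G_{(U)}'=[G_{(U)},G_{(U)}]$. *)

From Stdlib Require Import List.

Set Implicit Arguments.

Record is_group {G : Type} (mul : G -> G -> G) (inv : G -> G) (e : G) : Prop := {
  grp_assoc : forall a b c, mul a (mul b c) = mul (mul a b) c;
  grp_idl : forall a, mul e a = a;
  grp_idr : forall a, mul a e = a;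
  grp_invl : forall a, mul (inv a) a = e;
  grp_invr : forall a, mul a (inv a) = e }.

Section GroupDefs.
Variables (G : Type) (mul : G -> G -> G) (inv : G -> G) (e : G).

Definition commg (a b : G) : G := mul (mul (inv a) (inv b)) (mul a b).

Inductive gen (S : G -> Prop) : G -> Prop :=
  | gen_in : forall x, S x -> gen S x
  | gen_one : gen S e
  | gen_mul : forall x y, gen S x -> gen S y -> gen S (mul x y)
  | gen_inv : forall x, gen S x -> gen S (inv x).

Definition derived (H : G -> Prop) : G -> Prop :=
  gen (fun x => exists a b, H a /\ H b /\ x = commg a b).

Definition normal_closure (H : G -> Prop) : G -> Prop :=
  gen (fun x => exists g h, H h /\ x = mul (inv g) (mul h g)).

Definition is_normal_subgroup (N : G -> Prop) : Prop :=
  N e /\ (forall x y, N x -> N y -> N (mul x y)) /\ (forall x, N x -> N (inv x))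
  /\ (forall g x, N x -> N (mul (inv g) (mul x g))).
End GroupDefs.

Record is_topology {X : Type} (opn : (X -> Prop) -> Prop) : Prop := {
  top_full : opn (fun _ => True);
  top_inter : forall A B, opn A -> opn B -> opn (fun x => A x /\ B x);
  top_union : forall F : (X -> Prop) -> Prop,
      (forall A, F A -> opn A) -> opn (fun x => exists A, F A /\ A x) }.

Definition hausdorff {X : Type} (opn : (X -> Prop) -> Prop) : Prop :=
  forall x y : X, x <> y -> exists A B, opn A /\ opn B /\ A x /\ B y /\
     (forall z, ~ (A z /\ B z)).

Definition infinite_type (X : Type) : Prop :=
  ~ exists l : list X, forall x, In x l.

Definition continuous {X : Type} (opn : (X -> Prop) -> Prop) (f : X -> X) : Prop :=
  forall A, opn A -> opn (fun x => A (f x)).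

Definition is_basis {X : Type} (opn : (X -> Prop) -> Prop)
    (B : (X -> Prop) -> Prop) : Prop :=
  (forall W, B W -> opn W) /\
  (forall V, opn V -> forall x, V x ->
     exists W, B W /\ W x /\ (forall y, W y -> V y)).

Section ActionDefs.
Variables (G X : Type) (mul : G -> G -> G) (e : G) (act : G -> X -> X).

Definition is_action : Prop :=
  (forall x, act e x = x) /\ (forall g h x, act (mul g h) x = act g (act h x)).

Definition faithful : Prop := forall g, (forall x, act g x = x) -> g = e.

Definition img (g : G) (U : X -> Prop) : X -> Prop :=
  fun y => exists u, U u /\ y = act g u.

Definition orbit_sets (U : X -> Prop) : (X -> Prop) -> Prop :=
  fun W => exists g, forall y, W y <-> img g U y.

(* G_(U): elements acting trivially on X \ U *)
Definition rist (U : X -> Prop) : G -> Prop :=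
  fun g => forall x, ~ U x -> act g x = x.
End ActionDefs.

Definition R_U {G X : Type} (mul : G -> G -> G) (inv : G -> G) (e : G)
    (act : G -> X -> X) (U : X -> Prop) : G -> Prop :=
  normal_closure mul inv e (derived mul inv e (rist act U)).

From Stdlib Require Import Classical.
Set Implicit Arguments.

(* Pick n in N with n <> e.  By faithfulness n moves some point x0; the
   Hausdorff property separates x0 from n x0, and since the translates gU form
   a basis, some W = gU contains x0 and is disjoint from n^-1 W.  For a, b
   supported in W, the element d = n^-1 a^-1 n is supported in n^-1 W, hence
   commutes with a and b, so [a, b] = [a d, b]; but a d = [a^-1, n] lies in N,
   and so does any commutator with an element of N.  Thus N contains the
   commutators of G_(W).  Conjugating by g carries G_(U) into G_(W), so N
   contains the commutators of G_(U), hence G_(U)', hence its normal closure. *)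

Section Groups.
Variables (G : Type) (mul : G -> G -> G) (inv : G -> G) (e : G).
Hypothesis HG : is_group mul inv e.

Lemma inv_unique a b : mul a b = e -> inv a = b.
Proof.
  intro Hab.
  rewrite <- (grp_idr HG (inv a)), <- Hab, (grp_assoc HG), (grp_invl HG).
  apply (grp_idl HG).
Qed.

Lemma inv_inv a : inv (inv a) = a.
Proof. apply inv_unique, (grp_invl HG). Qed.

Lemma inv_mul a b : inv (mul a b) = mul (inv b) (inv a).
Proof.
  apply inv_unique.
  rewrite <- (grp_assoc HG), (grp_assoc HG b), (grp_invr HG), (grp_idl HG).
  apply (grp_invr HG).
Qed.

Lemma gen_min (S N : G -> Prop) :
  N e -> (forall x y, N x -> N y -> N (mul x y)) -> (forall x, N x -> N (inv x)) ->
  (forall x, S x -> N x) -> forall x, gen mul inv e S x -> N x.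
Proof. intros N1 NM NI SN x Hx; induction Hx; auto. Qed.

Lemma normal_closure_min (H N : G -> Prop) :
  is_normal_subgroup mul inv e N -> (forall x, H x -> N x) ->
  forall x, normal_closure mul inv e H x -> N x.
Proof.
  intros (N1 & NM & NI & NC) HN.
  apply gen_min; auto.
  intros x (g & h & Hh & ->). auto.
Qed.

Section Normal.
Variable N : G -> Prop.
Hypothesis HN : is_normal_subgroup mul inv e N.

Lemma normal_commg_l c b : N c -> N (commg mul inv c b).
Proof.
  destruct HN as (N1 & NM & NI & NC). intro Nc.
  unfold commg. rewrite <- (grp_assoc HG). auto.
Qed.

Lemma normal_commg_r a n : N n -> N (commg mul inv a n).
Proof.
  destruct HN as (N1 & NM & NI & NC). intro Nn.
  unfold commg. rewrite (grp_assoc HG), <- (grp_assoc HG (inv a)). auto.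
Qed.
End Normal.
End Groups.

Section Supports.
Variables (G : Type) (mul : G -> G -> G) (inv : G -> G) (e : G).
Hypothesis HG : is_group mul inv e.
Variables (X : Type) (act : G -> X -> X).
Hypothesis Hact : is_action mul e act.

Definition conjg (g x : G) : G := mul (inv g) (mul x g).

Definition disjoint (S T : X -> Prop) : Prop := forall z, ~ (S z /\ T z).

Lemma act_mul g h x : act (mul g h) x = act g (act h x).
Proof. apply (proj2 Hact). Qed.

Lemma act_invK g x : act (inv g) (act g x) = x.
Proof. rewrite <- act_mul, (grp_invl HG). apply (proj1 Hact). Qed.

Lemma act_Kinv g x : act g (act (inv g) x) = x.
Proof. rewrite <- act_mul, (grp_invr HG). apply (proj1 Hact). Qed.

Lemma rist_mono (S T : X -> Prop) a :
  (forall x, S x -> T x) -> rist act S a -> rist act T a.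
Proof. intros ST Ha x Tx. apply Ha. intro Sx. auto. Qed.

Lemma rist_mul S a b : rist act S a -> rist act S b -> rist act S (mul a b).
Proof. intros Ha Hb x Sx. rewrite act_mul, Hb, Ha; auto. Qed.

Lemma rist_inv S a : rist act S a -> rist act S (inv a).
Proof. intros Ha x Sx. rewrite <- (Ha x Sx) at 1. apply act_invK. Qed.

Lemma rist_commg S a b :
  rist act S a -> rist act S b -> rist act S (commg mul inv a b).
Proof. intros Ha Hb. unfold commg. auto using rist_mul, rist_inv. Qed.

Lemma rist_conj S g a :
  rist act S a -> rist act (fun z => S (act g z)) (conjg g a).
Proof. intros Ha z Sz. unfold conjg. rewrite !act_mul, Ha; auto. apply act_invK. Qed.

Lemma rist_stable S a y : rist act S a -> S y -> S (act a y).
Proof.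
  intros Ha Sy. apply NNPP. intro Out.
  assert (Fix : act a y = y).
  { rewrite <- (act_invK a (act a y)), (Ha _ Out). apply act_invK. }
  apply Out. rewrite Fix. exact Sy.
Qed.

Lemma disjoint_commute S T a d :
  rist act S a -> rist act T d -> disjoint S T ->
  forall y, act a (act d y) = act d (act a y).
Proof.
  intros Ha Hd D y.
  assert (NotT : forall z, S z -> ~ T z) by (intros z Sz Tz; exact (D z (conj Sz Tz))).
  destruct (classic (S y)) as [Sy | Sy].
  - rewrite (Hd y (NotT y Sy)), (Hd (act a y) (NotT _ (rist_stable _ Ha Sy))).
    reflexivity.
  - destruct (classic (T y)) as [Ty | Ty].
    + assert (Sdy : ~ S (act d y))
        by (intro Sdy; exact (NotT _ Sdy (rist_stable _ Hd Ty))).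
      rewrite (Ha y Sy), (Ha _ Sdy). reflexivity.
    + rewrite (Hd y Ty), (Ha y Sy), (Hd y Ty). reflexivity.
Qed.

Section Faithful.
Hypothesis Hfaith : faithful e act.

Lemma eq_by_act g h : (forall y, act g y = act h y) -> g = h.
Proof.
  intro Hgh.
  assert (E : mul g (inv h) = e).
  { apply Hfaith. intro y. rewrite act_mul, Hgh. apply act_Kinv. }
  rewrite <- (inv_inv HG g), (inv_unique HG _ _ E). apply (inv_inv HG).
Qed.

Lemma conjgK g a : conjg g (conjg (inv g) a) = a.
Proof.
  apply eq_by_act. intro y. unfold conjg.
  rewrite !act_mul, (inv_inv HG), !act_invK. reflexivity.
Qed.

Lemma commg_conjg g a b :
  commg mul inv (conjg g a) (conjg g b) = conjg g (commg mul inv a b).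
Proof.
  apply eq_by_act. intro y. unfold commg, conjg.
  rewrite !(inv_mul HG), !(inv_inv HG), !act_mul, !act_Kinv. reflexivity.
Qed.

(* If d is supported away from the common support S of a and b, then
   multiplying a by d does not change the commutator [a, b]: d commutes with
   b and with [a, b], so [a d, b] = d^-1 [a, b] d = [a, b]. *)
Lemma commg_disjoint_factor S T a b d :
  rist act S a -> rist act S b -> rist act T d -> disjoint S T ->
  commg mul inv (mul a d) b = commg mul inv a b.
Proof.
  intros Ha Hb Hd D.
  assert (Cb := disjoint_commute Hb Hd D).
  assert (Cab := disjoint_commute (rist_commg Ha Hb) Hd D).
  assert (Eab : forall z, act (commg mul inv a b) z =
                          act (inv a) (act (inv b) (act a (act b z)))).
  { intro z. unfold commg. rewrite !act_mul. reflexivity. }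
  apply eq_by_act. intro y.
  unfold commg at 1. rewrite (inv_mul HG), !act_mul, <- Cb, <- Eab, Cab.
  apply act_invK.
Qed.

Section Normal.
Variable N : G -> Prop.
Hypothesis HN : is_normal_subgroup mul inv e N.

(* If n in N displaces W off itself, then N contains every commutator of
   elements supported in W: with d = n^-1 a^-1 n, supported in n^-1 W, we get
   [a, b] = [a d, b], and a d = [a^-1, n] lies in N. *)
Lemma commutators_in_normal n W :
  N n -> (forall y, W y -> ~ W (act n y)) ->
  forall a b, rist act W a -> rist act W b -> N (commg mul inv a b).
Proof.
  intros Nn Disp a b Ha Hb.
  set (d := conjg n (inv a)).
  assert (Hd : rist act (fun z => W (act n z)) d) by apply (rist_conj n (rist_inv Ha)).
  assert (D : disjoint W (fun z => W (act n z))) by (intros z [Wz Wnz]; exact (Disp z Wz Wnz)).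
  assert (Ead : mul a d = commg mul inv (inv a) n).
  { unfold d, conjg, commg. rewrite (inv_inv HG). apply (grp_assoc HG). }
  rewrite <- (commg_disjoint_factor Ha Hb Hd D), Ead.
  apply (normal_commg_l HG HN), (normal_commg_r HG HN), Nn.
Qed.

(* Conjugation by g carries G_(U) into G_(gU); hence if N contains the
   commutators of G_(gU), it contains the derived subgroup of G_(U). *)
Lemma derived_in_normal U W g :
  (forall y, W y <-> img act g U y) ->
  (forall a b, rist act W a -> rist act W b -> N (commg mul inv a b)) ->
  forall x, derived mul inv e (rist act U) x -> N x.
Proof.
  intros Wg Hcomm.
  destruct HN as (N1 & NM & NI & NC).
  assert (Transfer : forall a, rist act U a -> rist act W (conjg (inv g) a)).
  { intros a Ha. apply rist_mono with (S := fun z => U (act (inv g) z)).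
    - intros z Uz. apply Wg. exists (act (inv g) z). split; [exact Uz | symmetry; apply act_Kinv].
    - apply rist_conj, Ha. }
  apply gen_min; auto.
  intros x (a & b & Ha & Hb & ->).
  rewrite <- (conjgK g a), <- (conjgK g b), commg_conjg.
  apply NC, Hcomm; apply Transfer; assumption.
Qed.
End Normal.
End Faithful.
End Supports.

Lemma displaced_basic_open (X : Type) (opn : (X -> Prop) -> Prop)
  (B : (X -> Prop) -> Prop) (f : X -> X) (x0 : X) :
  is_topology opn -> hausdorff opn -> is_basis opn B -> continuous opn f ->
  f x0 <> x0 -> exists W, B W /\ W x0 /\ (forall y, W y -> ~ W (f y)).
Proof.
  intros HX Hhaus [_ Hbasis] Hf Hx0.
  destruct (Hhaus x0 (f x0)) as (A & C & OA & OC & Ax0 & Cfx0 & DAC).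
  { intro E. apply Hx0. symmetry. exact E. }
  destruct (Hbasis (fun y => A y /\ C (f y))) with (x := x0) as (W & BW & Wx0 & WAC).
  - apply (top_inter HX); [exact OA | apply (Hf C OC)].
  - split; assumption.
  - exists W. split; [exact BW | split; [exact Wx0 |]].
    intros y Wy Wfy. apply (DAC (f y)). split.
    + exact (proj1 (WAC _ Wfy)).
    + exact (proj2 (WAC _ Wy)).
Qed.

Theorem lemma4p2 (G : Type) (mul : G -> G -> G) (inv : G -> G) (e : G)
  (HG : is_group mul inv e)
  (X : Type) (opn : (X -> Prop) -> Prop) (HX : is_topology opn)
  (Hhaus : hausdorff opn) (Hinf : infinite_type X)
  (act : G -> X -> X) (Hact : is_action mul e act)
  (Hhomeo : forall g, continuous opn (act g))
  (Hfaith : faithful e act)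
  (U : X -> Prop) (HU : opn U) (Hbasis : is_basis opn (orbit_sets act U)) :
  forall N : G -> Prop, is_normal_subgroup mul inv e N ->
    (exists n, N n /\ n <> e) ->
    forall x, R_U mul inv e act U x -> N x.
Proof.
  intros N HN (n & Nn & Hn).
  assert (Moved : exists x0, act n x0 <> x0).
  { apply NNPP. intro Fixed. apply Hn, Hfaith. intro y.
    apply NNPP. intro Hy. apply Fixed. exists y. exact Hy. }
  destruct Moved as (x0 & Hx0).
  destruct (displaced_basic_open HX Hhaus Hbasis (Hhomeo n) Hx0)
    as (W & (g & Wg) & _ & Disp).
  apply (normal_closure_min HN).
  apply (derived_in_normal HG Hact Hfaith HN Wg).
  exact (commutators_in_normal HG Hact Hfaith HN n Nn Disp).
Qed.
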